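(* There is an absolute constant $c>0$ such that for every sufficiently small $\varepsilon>0$ and every $u\in V$, $d^2_u-k_u\le\frac{c}{\varepsilon^2}(w_u-k_u)$.
   Context: A Correlation Clustering instance consists of a finite vertex set $V$ and a partition $E^+\uplus E^-=\binom V2$ of unordered pairs of distinct vertices into $+$edges and $-$edges. $\mathcal K$ is a partition of $V$ into atoms, and every pair of distinct vertices in a common atom is a $+$edge. For $u\in V$, $K_u$ is the atom containing $u$ and $k_u=|K_u|$. For $u,v\in V$ (possibly equal), $w_{uv}=\frac1{k_uk_v}\sum_{u'\in K_u,v'\in K_v}\mathbf 1[u'v'\text{ is a }+\text{edge or }u'=v']\in[0,1]$, and $w_u=\sum_{v\in V}w_{uv}$. Let $E^1=\{uv:\varepsilon w_v<w_u<w_v/\varepsilon\}$ and $N^1_u=\{v:uv\in E^1\}$ (unordered pairs, $u=v$ allowed). Let $E^2=\{uv: K_u=K_v,\ \text{or}\ uv\in E^1\text{ and }\sum_{p\in N^1_u\cap N^1_v}w_{up}w_{vp}>\varepsilon(w_u+w_v)\}$, and $d^2_u=|\{v\in V: uv\in E^2\}|$. *)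

From HB Require Import structures.
From mathcomp Require Import all_boot all_order all_algebra.
Set Implicit Arguments. Unset Strict Implicit. Unset Printing Implicit Defensive.
Import Order.TTheory GRing.Theory Num.Theory.
Local Open Scope ring_scope.

(* Correlation clustering instance: vertex set T (finite), [plus] the
   (symmetric) +edge relation on pairs of distinct vertices (all other pairs
   are -edges), and [K] a partition of the vertex set into atoms. *)

Section CC.
Variables (R : realFieldType) (T : finType) (plus : rel T) (K : {set {set T}}).

Definition cc_instance : Prop :=
  [/\ (forall x y, plus x y = plus y x),
      partition K [set: T] &
      (forall A, A \in K -> forall x y, x \in A -> y \in A -> x != y -> plus x y)].

Definition atom (u : T) : {set T} := pblock K u.
Definition katom (u : T) : nat := #|atom u|.

Definition plus_or_eq (x y : T) : bool := (x == y) || plus x y.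

Definition wpair (u v : T) : R :=
  (katom u * katom v)%:R^-1 *
  \sum_(u' in atom u) \sum_(v' in atom v) (plus_or_eq u' v')%:R.

Definition wvert (u : T) : R := \sum_(v : T) wpair u v.

Variable eps : R.

Definition E1 (u v : T) : bool := (eps * wvert v < wvert u) && (wvert u < wvert v / eps).

Definition N1 (u : T) : {set T} := [set v | E1 u v].

Definition E2 (u v : T) : bool :=
  (atom u == atom v) ||
  (E1 u v && (eps * (wvert u + wvert v) <
              \sum_(p in N1 u :&: N1 v) wpair u p * wpair v p)).

Definition d2 (u : T) : nat := #|[set v | E2 u v]|.

End CC.

(* Write A for the atom of u and D := w_u - k_u for the weight u sends outside A.
   Every v outside A with uv in E^2 has eps (w_u + w_v) < sum_(p in N^1_u) w_up w_vp;
   summing over these v and exchanging the sums, the atom points p contribute at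
   most k_u D (as w_vp = w_vu there), and every other p in N^1_u contributes at
   most w_up w_p < w_up w_u / eps.  Hence #{such v} eps w_u <= k_u D + D w_u / eps,
   and k_u <= w_u <= w_u / eps for eps <= 1 gives d^2_u - k_u <= 2 D / eps^2. *)
From HB Require Import structures.
From mathcomp Require Import all_boot all_order all_algebra.
From mathcomp Require Import ring.
Set Implicit Arguments. Unset Strict Implicit. Unset Printing Implicit Defensive.
Import Order.TTheory GRing.Theory Num.Theory.
Local Open Scope ring_scope.

Lemma ler_sum_subpred (R : numDomainType) (I : finType) (P Q : pred I)
    (f : I -> R) :
  (forall i, P i -> Q i) -> (forall i, Q i -> 0 <= f i) ->
  \sum_(i | P i) f i <= \sum_(i | Q i) f i.
Proof.
move=> PQ f_ge0; rewrite [X in _ <= X](bigID P) /=.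
have -> : \sum_(i | Q i && P i) f i = \sum_(i | P i) f i.
  by apply: eq_bigl => i; case Pi: (P i); rewrite ?andbT ?andbF ?PQ.
by rewrite lerDl; apply: sumr_ge0 => i /andP [/f_ge0].
Qed.

Section Weights.
Variables (R : realFieldType) (T : finType) (plus : rel T) (K : {set {set T}}).
Hypothesis cc : cc_instance plus K.

Local Notation w := (wpair R plus K).
Local Notation W := (wvert R plus K).

Lemma cover_atoms x : x \in cover K.
Proof. by case: cc => _ /and3P [/eqP -> _ _] _; rewrite inE. Qed.

Lemma mem_atom x : x \in atom K x.
Proof. by rewrite /atom mem_pblock cover_atoms. Qed.

Lemma eq_atomE x y : (atom K x == atom K y) = (y \in atom K x).
Proof. by case: cc => _ /and3P [_ triv _] _; rewrite /atom eq_pblock ?cover_atoms. Qed.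

Lemma atom_eq x y : y \in atom K x -> atom K y = atom K x.
Proof. by rewrite -eq_atomE => /eqP. Qed.

Lemma katom_gt0 x : (0 < katom K x)%N.
Proof. by apply/card_gt0P; exists x; apply: mem_atom. Qed.

Lemma wpair_ge0 x y : 0 <= w x y.
Proof.
rewrite mulr_ge0 ?invr_ge0 ?ler0n //.
by apply: sumr_ge0 => i _; apply: sumr_ge0 => j _; rewrite ler0n.
Qed.

Lemma wvert_ge0 x : 0 <= W x.
Proof. by apply: sumr_ge0 => y _; apply: wpair_ge0. Qed.

Lemma wpairC x y : w x y = w y x.
Proof.
case: cc => plusC _ _; rewrite /wpair mulnC exchange_big /=.
congr (_ * _); apply: eq_bigr => i _; apply: eq_bigr => j _.
by rewrite /plus_or_eq plusC eq_sym.
Qed.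

Lemma sum_wpair_l p : \sum_v w v p = W p.
Proof. by apply: eq_bigr => v _; rewrite wpairC. Qed.

Lemma wpair_atom x p : p \in atom K x -> w x p = 1.
Proof.
move=> /atom_eq Ep; rewrite /wpair /katom Ep.
have plus_or_eq_atom i j : i \in atom K x -> j \in atom K x -> plus_or_eq plus i j.
  case: cc => _ _ in_atom_plus Hi Hj; rewrite /plus_or_eq.
  by case: eqP => //= /eqP; apply: in_atom_plus (pblock_mem (cover_atoms x)) _ _ Hi Hj.
rewrite (eq_bigr (fun _ => #|atom K x|%:R)); last first.
  move=> i Hi; rewrite (eq_bigr (fun _ => 1)) ?sumr_const //.
  by move=> j Hj; rewrite plus_or_eq_atom.
rewrite sumr_const -mulrnA mulVf // pnatr_eq0 muln_eq0 negb_or -lt0n andbb.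
exact: katom_gt0.
Qed.

Definition wout u : R := \sum_(p | p \notin atom K u) w u p.

Lemma wout_ge0 u : 0 <= wout u.
Proof. by apply: sumr_ge0 => p _; apply: wpair_ge0. Qed.

Lemma wvertE u : W u = (katom K u)%:R + wout u.
Proof.
rewrite /wvert (bigID (mem (atom K u))) /=; congr (_ + _).
by rewrite (eq_bigr (fun _ => 1)) ?sumr_const // => p; apply: wpair_atom.
Qed.

Lemma wvert_gt0 u : 0 < W u.
Proof. by rewrite wvertE ltr_wpDr ?wout_ge0 // ltr0n katom_gt0. Qed.

Variable eps : R.
Hypothesis eps_gt0 : 0 < eps.

Lemma E1_wvert_lt u p : E1 plus K eps u p -> W p < W u / eps.
Proof. by rewrite ltr_pdivlMr // mulrC => /andP []. Qed.

Variable u : T.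

Definition E2_out : {set T} := [set v | (v \notin atom K u) && E2 plus K eps u v].

Lemma d2_le_katom_E2_out : (d2 plus K eps u <= katom K u + #|E2_out|)%N.
Proof.
apply: leq_trans (leq_card_setU _ _); apply: subset_leq_card.
by apply/subsetP => v; rewrite !inE; case: (v \in atom K u) => //= ->.
Qed.

Lemma E2_out_wvert_le v : v \in E2_out ->
  eps * W u <= \sum_(p in N1 plus K eps u) w u p * w v p.
Proof.
rewrite inE => /andP [v_out]; rewrite /E2 eq_atomE (negbTE v_out) /=.
move=> /andP [_ /ltW lt_sum]; apply: le_trans (le_trans _ lt_sum) _.
  by rewrite ler_pM2l // lerDl wvert_ge0.
apply: ler_sum_subpred => [p|p _]; first by rewrite inE => /andP [].
by rewrite mulr_ge0 ?wpair_ge0.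
Qed.

Lemma sum_E2_out_wpair_atom p : p \in atom K u ->
  \sum_(v in E2_out) w v p <= wout u.
Proof.
move=> /atom_eq Ep; rewrite (eq_bigr (w u)) => [|v _]; last first.
  by rewrite wpairC /wpair /katom Ep.
by apply: ler_sum_subpred => [v|v _]; [rewrite inE => /andP [] | apply: wpair_ge0].
Qed.

Lemma sum_E2_out_wpair p : \sum_(v in E2_out) w v p <= W p.
Proof. by rewrite -sum_wpair_l; apply: ler_sum_subpred => // v _; apply: wpair_ge0. Qed.

Lemma card_E2_out_wvert_le :
  #|E2_out|%:R * (eps * W u) <=
    (katom K u)%:R * wout u + wout u * (W u / eps).
Proof.
pose bound p := if p \in atom K u then wout u else W u / eps.
have bound_ge0 p : 0 <= bound p.
  by rewrite /bound; case: ifP => _; rewrite ?wout_ge0 ?divr_ge0 ?wvert_ge0 ?ltW.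
rewrite mulr_natl -sumr_const.
apply: le_trans (ler_sum _ E2_out_wvert_le) _; rewrite exchange_big /=.
apply: le_trans (_ : \sum_p w u p * bound p <= _).
  apply: le_trans (_ : \sum_(p in N1 plus K eps u) w u p * bound p <= _).
    apply: ler_sum => p; rewrite inE => E1p; rewrite -mulr_sumr ler_wpM2l ?wpair_ge0 //.
    rewrite /bound; case: ifP => [/sum_E2_out_wpair_atom //|_].
    exact: le_trans (sum_E2_out_wpair _) (ltW (E1_wvert_lt E1p)).
  by apply: ler_sum_subpred => // p _; rewrite mulr_ge0 ?wpair_ge0.
rewrite (bigID (mem (atom K u))) /= lerD //.
  rewrite (eq_bigr (fun _ => wout u)) ?sumr_const ?mulr_natl //.
  by move=> p Hp; rewrite wpair_atom // /bound Hp mul1r.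
by rewrite mulr_suml; apply: ler_sum => p /negbTE Hp; rewrite /bound Hp.
Qed.

Hypothesis eps_le1 : eps <= 1.

Lemma card_E2_out_le : #|E2_out|%:R <= 2 / eps ^+ 2 * wout u.
Proof.
have Wu_gt0 := wvert_gt0 u; have D_ge0 := wout_ge0 u.
have W_le : W u <= W u / eps by rewrite ler_pdivlMr // ler_piMr // ltW.
have kD_le : (katom K u)%:R * wout u <= wout u * (W u / eps).
  rewrite mulrC ler_wpM2l //; apply: le_trans W_le.
  by rewrite wvertE lerDl.
have := le_trans card_E2_out_wvert_le (lerD kD_le (lexx _)).
have -> : wout u * (W u / eps) + wout u * (W u / eps)
          = 2 / eps ^+ 2 * wout u * (eps * W u).
  by field; rewrite gt_eqF.
by rewrite ler_pM2r // mulr_gt0.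
Qed.

End Weights.

Theorem lemma12 :
  exists c : rat, 0 < c /\
  exists eps0 : rat, 0 < eps0 /\
  forall (R : realFieldType) (eps : R), 0 < eps -> eps < ratr eps0 ->
  forall (T : finType) (plus : rel T) (K : {set {set T}}),
  cc_instance plus K ->
  forall u : T,
    (d2 plus K eps u)%:R - (katom K u)%:R
      <= ratr c / eps ^+ 2 * (wvert R plus K u - (katom K u)%:R).
Proof.
exists 2; split => //; exists 1; split => // R eps eps_gt0.
rewrite rmorph1 rmorph_nat => /ltW eps_le1 T plus K cc u.
have -> : wvert R plus K u - (katom K u)%:R = wout R plus K u.
  by rewrite (wvertE R cc) addrAC subrr add0r.
apply: le_trans (card_E2_out_le cc eps_gt0 u eps_le1).
by rewrite lerBlDl -natrD ler_nat d2_le_katom_E2_out.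
Qed.
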